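(* Let $J$ be a finite index set and for each $j\in J$ let $\Lambda_j\subset[0,2]$ be a finite multiset of numbers. Let $G$ and $G_j$ ($j\in J$) be finite simple graphs without isolated vertices such that: (a) $G_j\preccurlyeq_{t'_j} G\preccurlyeq_{t''_j} G_j$ for some $t'_j,t''_j\in\mathbb N_0$, and set $t_j:=t'_j+t''_j$; (b) $\Lambda_j$ has multiplicity $\mu_j$ in the spectrum of the standard Laplacian of $G_j$, with $\mu_j>t_j$; (c) the sets $\Lambda_j$, $j\in J$, are pairwise disjoint; (d) $|G|=\sum_{j\in J}(\mu_j-t_j)\,|\Lambda_j|$ (where $|\Lambda_j|$ counts elements with multiplicity). Then the spectrum of the standard Laplacian of $G$ (as a multiset) equals $\biguplus_{j\in J}\Lambda_j^{(\mu_j-t_j)}$, i.e. each element of $\Lambda_j$ occurring $s$ times in $\Lambda_j$ occurs exactly $s(\mu_j-t_j)$ times in the spectrum of $G$, and there are no other eigenvalues. The same statement holds for the signless standard Laplacians.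
   Context: All graphs are finite, simple, without isolated vertices; $|G|$ is the number of vertices. The standard Laplacian is $(\Delta_G f)(v)=f(v)-\frac{1}{\deg v}\sum_{u\in N_v}f(u)$ and the signless one $(\Delta_{G^+}f)(v)=f(v)+\frac{1}{\deg v}\sum_{u\in N_v}f(u)$ (equivalently the matrices $I\mp D^{-1/2}AD^{-1/2}$); their eigenvalues in ascending order with multiplicity are $\lambda_1(G)\le\dots\le\lambda_{|G|}(G)$, and spectra lie in $[0,2]$. Spectral preorder: $G\preccurlyeq_t G'$ ($t\in\mathbb N_0$) means $|G|\ge|G'|-t$ and $\lambda_k(G)\le\lambda_{k+t}(G')$ for all $1\le k\le|G'|-t$. A multiset $\Lambda$ has multiplicity $\mu$ in a spectrum $\sigma$ if each element of $\Lambda$ having multiplicity $s$ in $\Lambda$ has multiplicity at least $s\mu$ in $\sigma$; this is written $\Lambda^{(\mu)}\subset\sigma$, and $\Lambda^{(\mu)}$ denotes $\Lambda$ with all multiplicities multiplied by $\mu$; $\biguplus$ is the multiset union. *)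

From HB Require Import structures.
From mathcomp Require Import all_boot all_order all_algebra.
From mathcomp Require Import reals.
Set Implicit Arguments. Unset Strict Implicit. Unset Printing Implicit Defensive.
Import Order.TTheory GRing.Theory Num.Theory.
Local Open Scope ring_scope.

Definition simple_graph (n : nat) (e : rel 'I_n) : Prop :=
  [/\ symmetric e, irreflexive e & forall v : 'I_n, exists u, e v u].

Definition gdeg (n : nat) (e : rel 'I_n) (v : 'I_n) : nat := #|[set u | e v u]|.

(* Normalized Laplacian matrix  I - D^{-1/2} A D^{-1/2}  (signless = false)
   or signless one  I + D^{-1/2} A D^{-1/2}  (signless = true). *)
Definition nlap (R : realType) (signless : bool) (n : nat) (e : rel 'I_n)
  : 'M[R]_n :=
  \matrix_(i, j) ((i == j)%:R +
     (if signless then 1 else -1) * (e i j)%:R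
       / Num.sqrt ((gdeg e i)%:R * (gdeg e j)%:R)).

Definition is_spectrum (R : realType) (n : nat) (M : 'M[R]_n) (s : seq R) : Prop :=
  sorted <=%R s /\ char_poly M = \prod_(x <- s) ('X - x%:P).

(* Spectral preorder on ascending spectra: s ≼_t s'  iff
   |s| >= |s'| - t and lambda_k(s) <= lambda_{k+t}(s') for 1 <= k <= |s'| - t
   (here 0-indexed). *)
Definition spec_prec (R : realType) (t : nat) (s s' : seq R) : Prop :=
  (size s' - t <= size s)%N /\
  forall k : nat, (k < size s' - t)%N -> s`_k <= s'`_(k + t).

Definition has_mult (R : realType) (Lam : seq R) (mu : nat) (sigma : seq R) : Prop :=
  forall x, x \in Lam -> (count_mem x Lam * mu <= count_mem x sigma)%N.

Definition mscale (R : realType) (Lam : seq R) (mu : nat) : seq R :=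
  flatten (nseq mu Lam).

From HB Require Import structures.
From mathcomp Require Import all_boot all_order all_algebra.
From mathcomp Require Import reals.
From mathcomp Require Import zify.
Import Order.TTheory GRing.Theory Num.Theory.
Local Open Scope ring_scope.

(** Interlacing [s ≼_t s' ≼_t'' s] shifts the sorted spectra against each
    other by at most [t + t''] places, so an eigenvalue of multiplicity [m] in
    one spectrum keeps multiplicity at least [m - (t + t'')] in the other.
    Applied to [G_j] this gives every element of [Λ_j] multiplicity at least
    [s (μ_j - t_j)] in the spectrum of [G]; the [Λ_j] being disjoint, these
    lower bounds add up to [|G|], the total size of the spectrum, so all of
    them are equalities and no other eigenvalue is left. *)

Section SortedCount.
Context {disp : Order.disp_t} {T : porderType disp}.
Implicit Types (s : seq T) (P : pred T).

Definition downward_closed P := forall y z, (z <= y)%O -> P y -> P z.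

Lemma sorted_nth_count P s x0 i :
  sorted <=%O s -> downward_closed P -> (i < count P s)%N -> P (nth x0 s i).
Proof.
move=> sorted_s P_down; elim: s sorted_s i => [|a s IHs] //= path_as i.
have sorted_s := path_sorted path_as.
case Pa: (P a) => /=; first by case: i => [|i] //= ?; apply: IHs.
suff -> : count P s = 0%N by [].
apply/eqP; rewrite -leqn0 leqNgt -has_count; apply/hasPn => y s_y.
apply/negP => Py; move/negP: Pa; apply; apply: P_down Py.
by apply: (allP (order_path_min le_trans path_as)).
Qed.

Lemma leq_count_prefix P s x0 m :
  (m <= size s)%N -> (forall i, (i < m)%N -> P (nth x0 s i)) ->
  (m <= count P s)%N.
Proof.
elim: s m => [|a s IHs] [|m] //= m_le P_prefix.
rewrite (P_prefix 0%N) // add1n ltnS; apply: IHs => // i ?.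
exact: (P_prefix i.+1).
Qed.

Lemma count_le_lt_mem s x :
  count (<= x)%O s = (count (< x)%O s + count_mem x s)%N.
Proof.
elim: s => //= a s ->; rewrite le_eqVlt; case: eqP => [->|_] /=.
  by rewrite ltxx; lia.
by case: (a < x)%O; lia.
Qed.

End SortedCount.

Lemma perm_count_mem_leq (T : eqType) (s1 s2 : seq T) :
  (forall x, count_mem x s1 <= count_mem x s2)%N ->
  (size s2 <= size s1)%N -> perm_eq s1 s2.
Proof.
move=> count_le size_le; have [s sub_s perm_s] := (count_subseqP s1 s2).1 count_le.
suff <- : s = s2 by [].
apply/eqP; rewrite -(size_subseq_leqif sub_s).2 eqn_leq size_subseq //=.
by rewrite -(perm_size perm_s).
Qed.

Section SpectralPreorder.
Context {R : realType}.
Implicit Types (s : seq R) (P : pred R).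

Lemma spec_prec_count {P t s s'} :
  sorted <=%R s' -> downward_closed P -> spec_prec t s s' ->
  (count P s' - t <= count P s)%N.
Proof.
move=> sorted_s' P_down [size_s shifted_le].
have count_s' := count_size P s'.
apply: (leq_count_prefix _ _ 0) => [|k k_lt].
  exact: leq_trans (leq_sub2r t count_s') size_s.
have P_shifted : P s'`_(k + t).
  by apply: sorted_nth_count => //; rewrite addnC -ltn_subRL.
exact: P_down (shifted_le k (leq_trans k_lt (leq_sub2r t count_s'))) P_shifted.
Qed.

Lemma spec_prec_count_mem {t1 t2 s1 s2} x :
  sorted <=%R s1 -> sorted <=%R s2 ->
  spec_prec t1 s1 s2 -> spec_prec t2 s2 s1 ->
  (count_mem x s1 - (t1 + t2) <= count_mem x s2)%N.
Proof.
move=> sorted_s1 sorted_s2 prec12 prec21.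
have le_down : downward_closed (<= x)%R by move=> y z; apply: le_trans.
have lt_down : downward_closed (< x)%R by move=> y z; apply: le_lt_trans.
have le_shift : (count (<= x)%R s1 - t2 <= count (<= x)%R s2)%N.
  exact: spec_prec_count sorted_s1 le_down prec21.
have lt_shift : (count (< x)%R s2 - t1 <= count (< x)%R s1)%N.
  exact: spec_prec_count sorted_s2 lt_down prec12.
have split_s1 : count (<= x)%R s1 = (count (< x)%R s1 + count_mem x s1)%N.
  exact: count_le_lt_mem.
have split_s2 : count (<= x)%R s2 = (count (< x)%R s2 + count_mem x s2)%N.
  exact: count_le_lt_mem.
lia.
Qed.

Lemma has_mult_spec_prec {Lam mu t1 t2 s s'} :
  sorted <=%R s -> sorted <=%R s' ->
  spec_prec t1 s s' -> spec_prec t2 s' s ->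
  has_mult Lam mu s -> has_mult Lam (mu - (t1 + t2)) s'.
Proof.
move=> sorted_s sorted_s' prec prec' mult_s x Lam_x.
have c_gt0 : (0 < count_mem x Lam)%N by rewrite -has_count has_pred1.
apply: leq_trans (spec_prec_count_mem x sorted_s sorted_s' prec prec').
apply: leq_trans (leq_sub2r _ (mult_s x Lam_x)).
by rewrite mulnBr leq_sub2l // leq_pmull.
Qed.

Lemma size_spectrum {n} {M : 'M[R]_n} {s} : is_spectrum M s -> size s = n.
Proof.
by case=> _ charM; have := size_char_poly M; rewrite charM size_prod_XsubC => -[].
Qed.

End SpectralPreorder.

Section Mscale.
Context {R : realType}.

Lemma count_mem_mscale (Lam : seq R) mu x :
  count_mem x (mscale Lam mu) = (count_mem x Lam * mu)%N.
Proof. by rewrite count_flatten map_nseq sumn_nseq. Qed.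

Lemma size_mscale (Lam : seq R) mu : size (mscale Lam mu) = (size Lam * mu)%N.
Proof. by rewrite size_flatten /shape map_nseq sumn_nseq. Qed.

Context {J : finType} {Lam : J -> seq R} {m : J -> nat}.
Let L := flatten [seq mscale (Lam j) (m j) | j <- enum J].

Lemma size_flatten_mscale : size L = (\sum_j m j * size (Lam j))%N.
Proof.
rewrite size_flatten /shape -map_comp sumnE big_map -big_enum /=.
by apply: eq_bigr => j _; rewrite size_mscale mulnC.
Qed.

Lemma count_mem_flatten_mscale_notin x :
  (forall j, x \notin Lam j) -> count_mem x L = 0%N.
Proof.
move=> notin_Lam; apply/count_memPn; apply/flattenP => -[_ /mapP[j _ ->]].
by rewrite /mscale => /flattenP[_ /nseqP[-> _]]; apply/negP.
Qed.

Hypothesis Lam_disjoint :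
  forall i j, i != j -> forall x, x \in Lam i -> x \notin Lam j.

Lemma count_mem_flatten_mscale {j x} :
  x \in Lam j -> count_mem x L = (count_mem x (Lam j) * m j)%N.
Proof.
move=> Lam_j_x.
rewrite count_flatten -map_comp sumnE big_map (bigD1_seq j) ?mem_enum ?enum_uniq //=.
rewrite big1 ?addn0 ?count_mem_mscale // => i i_neq_j.
by rewrite count_mem_mscale (count_memPn (Lam_disjoint _ _ _ _ Lam_j_x)) // eq_sym.
Qed.

End Mscale.

Theorem mainTheorem2 (R : realType) (signless : bool) (J : finType)
  (Lam : J -> seq R)
  (n : nat) (e : rel 'I_n) (sG : seq R)
  (nj : J -> nat) (ej : forall j : J, rel 'I_(nj j)) (sj : J -> seq R)
  (t' t'' mu : J -> nat) :
  (forall j, all (fun x => (0 <= x) && (x <= 2)) (Lam j)) ->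
  simple_graph e ->
  (forall j, simple_graph (ej j)) ->
  is_spectrum (nlap R signless e) sG ->
  (forall j, is_spectrum (nlap R signless (ej j)) (sj j)) ->
  (* (a) *)
  (forall j, spec_prec (t' j) (sj j) sG /\ spec_prec (t'' j) sG (sj j)) ->
  (* (b) *)
  (forall j, has_mult (Lam j) (mu j) (sj j) /\ (t' j + t'' j < mu j)%N) ->
  (* (c) *)
  (forall i j, i != j -> forall x, x \in Lam i -> x \notin Lam j) ->
  (* (d) *)
  n = (\sum_(j : J) (mu j - (t' j + t'' j)) * size (Lam j))%N ->
  perm_eq sG
    (flatten [seq mscale (Lam j) (mu j - (t' j + t'' j)) | j <- enum J]).
Proof.
move=> _ _ _ spec_G spec_Gj prec mult Lam_disjoint size_G.
have mult_G j : has_mult (Lam j) (mu j - (t' j + t'' j)) sG.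
  have [prec' prec''] := prec j.
  exact: has_mult_spec_prec (spec_Gj j).1 spec_G.1 prec' prec'' (mult j).1.
rewrite perm_sym perm_count_mem_leq //; last first.
  by rewrite size_flatten_mscale (size_spectrum spec_G) size_G.
move=> x; have [j Lam_j_x | notin_Lam] := pickP (fun j => x \in Lam j).
  by rewrite (count_mem_flatten_mscale Lam_disjoint Lam_j_x) mult_G.
by rewrite count_mem_flatten_mscale_notin // => j; rewrite notin_Lam.
Qed.
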